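(* For any $\gamma>0$ and $\Delta>0$ there exists a performative prediction problem (a dimension $d$, a closed convex parameter set $\Theta\subseteq\mathbb{R}^d$, a distribution map $\mathcal{D}(\cdot)$ and a loss $\ell$) such that the loss is $\gamma$-strongly convex in $\theta$, there is a unique performatively stable point $\theta_{\mathrm{PS}}$, this point $\theta_{\mathrm{PS}}$ is a maximizer of the performative risk over $\Theta$, and $\mathrm{PR}(\theta_{\mathrm{PS}})-\min_{\theta\in\Theta}\mathrm{PR}(\theta)\geq \Delta$.
   Context: A performative prediction problem consists of a closed convex set $\Theta\subseteq\mathbb{R}^d$ of model parameters, a distribution map $\mathcal{D}(\cdot)$ assigning to each $\theta\in\Theta$ a probability distribution $\mathcal{D}(\theta)$ over $\mathbb{R}^m$, and a loss function $\ell(z;\theta)$. The performative risk is $\mathrm{PR}(\theta)=\mathbb{E}_{z\sim\mathcal{D}(\theta)}\ell(z;\theta)$. A point $\theta_{\mathrm{PS}}\in\Theta$ is performatively stable if $\theta_{\mathrm{PS}}\in\arg\min_{\theta\in\Theta}\mathbb{E}_{z\sim\mathcal{D}(\theta_{\mathrm{PS}})}\ell(z;\theta)$. The loss is $\gamma$-strongly convex in $\theta$ if for all $\theta,\theta',\theta_0\in\Theta$: $\mathbb{E}_{z\sim\mathcal{D}(\theta_0)}\ell(z;\theta)\geq \mathbb{E}_{z\sim\mathcal{D}(\theta_0)}\ell(z;\theta')+\mathbb{E}_{z\sim\mathcal{D}(\theta_0)}\nabla_\theta\ell(z;\theta')^\top(\theta-\theta')+\frac{\gamma}{2}\|\theta-\theta'\|_2^2$.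 *)

From HB Require Import structures.
From mathcomp Require Import all_boot all_order all_algebra.
From mathcomp Require Import all_classical all_reals all_analysis.
Set Implicit Arguments. Unset Strict Implicit. Unset Printing Implicit Defensive.
Import Order.TTheory GRing.Theory Num.Theory.
Import numFieldNormedType.Exports.
Local Open Scope classical_set_scope.
Local Open Scope ring_scope.

(* Parameters theta live in R^d = 'rV[R]_d (a normed module, so that the
   differential 'd is available); data z live in R^m = m.-tuple R, equipped
   with the product Borel sigma-algebra (generated by the coordinates). *)

Section Performative.
Context {R : realType} {d m : nat}.

Notation Z := (m.-tuple R).
Notation Par := 'rV[R]_d.

(* expectation E_{z ~ P} f z (real-valued; used only under integrability) *)
Definition expect (P : probability Z R) (f : Z -> R) : R :=
  Rintegral P setT f.

Definition sqnorm2 (v : Par) : R := \sum_(i < d) (v ord0 i) ^+ 2.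

(* E_{z ~ D(theta0)} grad_theta l(z; theta')^T (theta - theta'), written via
   the differential of theta |-> l(z; theta) at theta' applied to theta - theta'. *)
Definition exp_grad_dir (D : Par -> probability Z R) (ell : Z -> Par -> R)
  (theta0 theta' h : Par) : R :=
  expect (D theta0) (fun z => 'd (ell z) theta' h).

Definition well_posed (Theta : set Par) (D : Par -> probability Z R)
  (ell : Z -> Par -> R) : Prop :=
  (forall z theta, differentiable (ell z) theta) /\
  (forall theta0 theta, Theta theta0 -> Theta theta ->
     (D theta0).-integrable setT (fun z => (ell z theta)%:E)) /\
  (forall theta0 theta theta', Theta theta0 -> Theta theta -> Theta theta' ->
     (D theta0).-integrable setT
       (fun z => ('d (ell z) theta' (theta - theta'))%:E)).

Definition strongly_convex (gamma : R) (Theta : set Par)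
  (D : Par -> probability Z R) (ell : Z -> Par -> R) : Prop :=
  forall theta theta' theta0, Theta theta -> Theta theta' -> Theta theta0 ->
    expect (D theta0) (fun z => ell z theta) >=
      expect (D theta0) (fun z => ell z theta')
      + exp_grad_dir D ell theta0 theta' (theta - theta')
      + gamma / 2 * sqnorm2 (theta - theta').

Definition PR (D : Par -> probability Z R) (ell : Z -> Par -> R) (theta : Par) : R :=
  expect (D theta) (fun z => ell z theta).

Definition perf_stable (Theta : set Par) (D : Par -> probability Z R)
  (ell : Z -> Par -> R) (thetaPS : Par) : Prop :=
  Theta thetaPS /\
  forall theta, Theta theta ->
    expect (D thetaPS) (fun z => ell z thetaPS)
      <= expect (D thetaPS) (fun z => ell z theta).

End Performative.

From HB Require Import structures.
From mathcomp Require Import all_boot all_order all_algebra.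
From mathcomp Require Import all_classical all_reals all_analysis.
From mathcomp Require Import measurable_realfun ring lra.
Import Order.TTheory GRing.Theory Num.Theory.
Import numFieldNormedType.Exports.
Local Open Scope classical_set_scope.
Local Open Scope ring_scope.

(* Take Theta = [0, 1] and the squared loss l(z; theta) = (gamma/2) (theta - z)^2,
   which is gamma-strongly convex, with equality, under any distribution map.
   Let D(theta) be the point mass at theta - 1 for theta <> 0 and at -M for
   theta = 0.  Against D(theta) with theta > 0 the best response is 0, so 0 is
   the only stable point; yet PR(0) = (gamma/2) M^2 while PR = gamma/2 elsewhere,
   so 0 maximizes PR, with a gap exceeding Delta once M = 1 + 2 Delta / gamma. *)

Section expect_dirac.
Context {R : realType} {m : nat}.

Lemma expect_dirac (f : m.-tuple R -> R) (w : m.-tuple R) :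
  measurable_fun setT f -> expect \d_w f = f w.
Proof.
move=> mf; rewrite /expect /Rintegral integral_dirac//=.
  by rewrite indicT mul1r.
exact/measurable_EFinP.
Qed.

Lemma integrable_dirac (f : m.-tuple R -> R) (w : m.-tuple R) :
  measurable_fun setT f -> (\d_w).-integrable setT (fun z => (f z)%:E).
Proof.
move=> mf; apply/integrableP; split; first exact/measurable_EFinP.
rewrite integral_dirac//=; first by rewrite diracT mul1e ltry.
by apply/measurable_EFinP; exact: measurableT_comp.
Qed.

End expect_dirac.

Section quadratic_loss.
Context {R : realType}.

Definition coord1 (t : 'rV[R]_1) : R := t ord0 ord0.

Lemma coord1_is_linear : linear coord1.
Proof. by move=> k x y; rewrite /coord1 !mxE. Qed.

HB.instance Definition _ := GRing.isLinear.Build R _ _ _ coord1 coord1_is_linear.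

Lemma coord1_continuous : continuous coord1.
Proof. exact: coord_continuous. Qed.

Lemma coord1_eq0 (t : 'rV[R]_1) : (coord1 t == 0) = (t == 0).
Proof.
apply/eqP/eqP => [t0|->]; last by rewrite /coord1 mxE.
by apply/matrixP => i j; rewrite !ord1 mxE.
Qed.

Definition sq_loss (a : R) (z : 1.-tuple R) (t : 'rV[R]_1) : R :=
  a * (coord1 t - tnth z ord0) ^+ 2.

Lemma sq_loss_diff a z t : differentiable (sq_loss a z) t /\
  'd (sq_loss a z) t = (fun h => 2 * a * (coord1 t - tnth z ord0) * coord1 h) :> (_ -> R).
Proof.
pose g := (coord1 : 'rV[R]_1 -> R) - cst (tnth z ord0).
have dcoord1 : differentiable coord1 t by exact: linear_differentiable coord1_continuous.
have dg : differentiable g t by apply: differentiableB.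
have dg_eq : 'd g t = coord1 :> (_ -> R).
  rewrite diffB// (diff_lin _ coord1_continuous) diff_cst.
  by apply/funext => h /=; rewrite subr0.
have -> : sq_loss a z = (a *: g) * g.
  by apply/funext => x; rewrite /sq_loss expr2 mulrA.
split; first by apply: differentiableM => //; apply: differentiableZ.
rewrite diffM//; last exact: differentiableZ.
rewrite diffZ// dg_eq; apply/funext => h /=.
rewrite /g /= !fctE /= /GRing.scale /=; ring.
Qed.

Lemma measurable_sq_loss a t :
  measurable_fun setT (fun z : 1.-tuple R => sq_loss a z t).
Proof.
apply: measurable_funM => //; apply: measurable_funX.
by apply: measurable_funB => //; exact: measurable_tnth.
Qed.

Lemma measurable_diff_sq_loss a t h :
  measurable_fun setT (fun z : 1.-tuple R => 'd (sq_loss a z) t h).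
Proof.
under eq_fun do rewrite (sq_loss_diff a _ t).2.
apply: measurable_funM => //; apply: measurable_funM => //.
by apply: measurable_funB => //; exact: measurable_tnth.
Qed.

Definition dirac_map (target : 'rV[R]_1 -> R) (t : 'rV[R]_1) :
  probability (1.-tuple R) R := \d_[tuple target t].

Lemma expect_sq_loss a target t0 t :
  expect (dirac_map target t0) (fun z => sq_loss a z t) =
  a * (coord1 t - target t0) ^+ 2.
Proof. by rewrite expect_dirac//; exact: measurable_sq_loss. Qed.

Lemma expect_diff_sq_loss a target t0 t h :
  expect (dirac_map target t0) (fun z => 'd (sq_loss a z) t h) =
  2 * a * (coord1 t - target t0) * coord1 h.
Proof.
rewrite expect_dirac; last exact: measurable_diff_sq_loss.
by have [_ ->] := sq_loss_diff a [tuple target t0] t.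
Qed.

Lemma well_posed_sq_loss a target (Theta : set 'rV[R]_1) :
  well_posed Theta (dirac_map target) (sq_loss a).
Proof.
split; first by move=> z t; exact: (sq_loss_diff a z t).1.
split=> [t0 t _ _|t0 t t' _ _ _]; apply: integrable_dirac.
- exact: measurable_sq_loss.
- exact: measurable_diff_sq_loss.
Qed.

Lemma sqnorm2_row1 (t : 'rV[R]_1) : sqnorm2 t = coord1 t ^+ 2.
Proof. by rewrite /sqnorm2 big_ord1. Qed.

Lemma strongly_convex_sq_loss gamma target (Theta : set 'rV[R]_1) :
  strongly_convex gamma Theta (dirac_map target) (sq_loss (gamma / 2)).
Proof.
move=> t t' t0 _ _ _.
rewrite /exp_grad_dir !expect_sq_loss expect_diff_sq_loss sqnorm2_row1 linearB /=.
lra.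
Qed.

End quadratic_loss.

Section jump_example.
Context {R : realType}.

Definition unit_segment : set 'rV[R]_1 := [set t | 0 <= coord1 t <= 1].

Lemma closed_unit_segment : closed unit_segment.
Proof.
rewrite (_ : unit_segment = coord1 @^-1` [set x | x \in `[0, 1]]); last first.
  by apply/seteqP; split => t; rewrite /= in_itv.
apply: closed_comp => [t _|]; first exact: coord1_continuous.
exact: interval_closed.
Qed.

Lemma convex_unit_segment : convex_set unit_segment.
Proof.
move=> x y l; rewrite !inE /unit_segment /= => /andP[x0 x1] /andP[y0 y1].
have -> : coord1 (conv l x y) = l%:num * coord1 x + (1 - l%:num) * coord1 y.
  by rewrite /coord1 !mxE.
have l0 : 0 <= l%:num by [].
have l1 : l%:num <= 1 by [].
apply/andP; split; nra.
Qed.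

Definition jump_target (M : R) (t : 'rV[R]_1) : R :=
  if t == 0 then - M else coord1 t - 1.

Variables (a M : R).

Let D := dirac_map (jump_target M).
Let ell := sq_loss a.

Lemma unit_segment0 : unit_segment 0.
Proof. by rewrite /unit_segment /coord1 /= mxE lexx ler01. Qed.

Lemma PR_jump0 : PR D ell 0 = a * M ^+ 2.
Proof. by rewrite /PR expect_sq_loss /jump_target eqxx linear0 sub0r opprK. Qed.

Lemma PR_jump_neq0 t : t != 0 -> PR D ell t = a.
Proof.
by move=> /negPf t0; rewrite /PR expect_sq_loss /jump_target t0 opprB addrC subrK expr1n mulr1.
Qed.

Lemma perf_stable_jump0 : 0 <= a -> 0 <= M -> perf_stable unit_segment D ell 0.
Proof.
move=> a0 M0; split=> [|t /andP[t0 _]]; first exact: unit_segment0.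
rewrite !expect_sq_loss /jump_target eqxx linear0 sub0r opprK.
have := mulr_ge0 a0 t0; nra.
Qed.

Lemma perf_stable_jump t : 0 < a -> perf_stable unit_segment D ell t -> t = 0.
Proof.
move=> a0 [/andP[t0 t1] /(_ 0 unit_segment0)]; apply: contraTeq => tn0.
rewrite !expect_sq_loss /jump_target (negPf tn0) linear0 -ltNge.
have /(mulr_gt0 a0) : 0 < coord1 t by rewrite lt_def coord1_eq0 tn0.
nra.
Qed.

Lemma PR_jump_bounds t : 0 <= a -> 1 <= M -> a <= PR D ell t <= a * M ^+ 2.
Proof.
move=> a0 M1; have aM : a <= a * M ^+ 2 by rewrite -[leLHS]mulr1 ler_wpM2l// exprn_ege1.
by have [->|/PR_jump_neq0 ->] := eqVneq t 0; rewrite ?PR_jump0 aM lexx.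
Qed.

End jump_example.

Theorem proposition2p1 (R : realType) (gamma Delta : R) :
  0 < gamma -> 0 < Delta ->
  exists (d m : nat) (Theta : set 'rV[R]_d)
         (D : 'rV[R]_d -> probability (m.-tuple R) R)
         (ell : m.-tuple R -> 'rV[R]_d -> R),
    [/\ (0 < d)%N /\ (0 < m)%N, closed Theta, convex_set Theta,
        well_posed Theta D ell /\ strongly_convex gamma Theta D ell &
        exists thetaPS : 'rV[R]_d,
          [/\ perf_stable Theta D ell thetaPS,
              (forall theta, perf_stable Theta D ell theta -> theta = thetaPS),
              (forall theta, Theta theta -> PR D ell theta <= PR D ell thetaPS) &
              exists thetaMin : 'rV[R]_d,
                [/\ Theta thetaMin,
                    (forall theta, Theta theta -> PR D ell thetaMin <= PR D ell theta) &
                    PR D ell thetaPS - PR D ell thetaMin >= Delta]]].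
Proof.
move=> gamma_gt0 Delta_gt0.
pose a := gamma / 2; pose M := 1 + Delta / a.
have a_gt0 : 0 < a by rewrite divr_gt0.
have a_ge0 : 0 <= a := ltW a_gt0.
have M_ge1 : 1 <= M by rewrite lerDl ltW ?divr_gt0.
have aM : a * (M - 1) = Delta by rewrite /M addrAC subrr add0r mulrC divfK ?gt_eqF.
exists 1%N, 1%N, unit_segment, (dirac_map (jump_target M)), (sq_loss a).
split=> //; [exact: closed_unit_segment | exact: convex_unit_segment | |].
  by split; [exact: well_posed_sq_loss | exact: strongly_convex_sq_loss].
exists 0; split.
- by apply: perf_stable_jump0 => //; exact: le_trans ler01 M_ge1.
- by move=> t; exact: perf_stable_jump.
- by move=> t _; rewrite PR_jump0; case/andP: (PR_jump_bounds _ _ t a_ge0 M_ge1).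
exists (const_mx 1); have one_neq0 : const_mx 1 != 0 :> 'rV[R]_1.
  by rewrite -coord1_eq0 /coord1 mxE oner_eq0.
split.
- by rewrite /unit_segment /= /coord1 mxE ler01 lexx.
- by move=> t _; rewrite PR_jump_neq0//; case/andP: (PR_jump_bounds _ _ t a_ge0 M_ge1).
- rewrite PR_jump0 PR_jump_neq0//; nra.
Qed.
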